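(* Let $L,p,q$ be positive integers with $p\ge 2$ and $p+q\le L$. For any $\varepsilon>0$ there exists a $(p,q)$-cliff sequence $\mathbf{l}\in\mathbb{R}^L$ (of some norm $C>0$) such that $\mathrm{softmax}(\mathbf{l})_i\le\varepsilon$ for every $i\in[1,p-1]\cup[p+q+1,L]$.
   Context: A sequence $\mathbf{l}=(\mathbf{l}_1,\dots,\mathbf{l}_L)\in\mathbb{R}^L$ is called a $(p,q)$-cliff sequence if: (1) (increasing segment) $\mathbf{l}_{i+1}>\mathbf{l}_i$ for all $i<p$; (2) (plateau) $\frac{\mathbf{l}_{p-1}+\mathbf{l}_p}{2}\le\mathbf{l}_j\le\mathbf{l}_p$ for all $j\in\{p+1,\dots,p+q\}$; (3) (descending segment) $\mathbf{l}_i<\mathbf{l}_1$ for all $p+q<i\le L$. Here $\mathrm{softmax}(\mathbf{l})_i=e^{\mathbf{l}_i}/\sum_{k=1}^L e^{\mathbf{l}_k}$. *)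

(* sequences l in R^L represented as functions nat -> R, indexed 1..L. *)
From Stdlib Require Import Reals.
Open Scope R_scope.

Fixpoint sum1 (n : nat) (f : nat -> R) : R :=
  match n with
  | O => 0
  | S m => sum1 m f + f n
  end.

Definition softmax (L : nat) (l : nat -> R) (i : nat) : R :=
  exp (l i) / sum1 L (fun k => exp (l k)).

Definition norm2 (L : nat) (l : nat -> R) : R :=
  sqrt (sum1 L (fun k => l k * l k)).

Definition cliff_seq (L p q : nat) (l : nat -> R) : Prop :=
  (forall i : nat, (1 <= i < p)%nat -> l i < l (S i)) /\
  (forall j : nat, (p + 1 <= j <= p + q)%nat ->
      (l (p - 1)%nat + l p) / 2 <= l j /\ l j <= l p) /\
  (forall i : nat, (p + q < i <= L)%nat -> l i < l 1%nat).

(* Take l_i = i before the peak, a plateau of height h from index p to p+q,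
   and 0 afterwards.  Every entry off the plateau is at most p - 1, while the
   partition function is at least e^h, so those softmax weights are at most
   e^(p-1-h), which drops below eps once h >= p + |ln eps|. *)

From Stdlib Require Import Reals Lra Lia.
Open Scope R_scope.

Lemma sum1_nonneg (n : nat) (f : nat -> R) :
  (forall k, 0 <= f k) -> 0 <= sum1 n f.
Proof.
  intros Hf; induction n as [|n IH]; simpl; [lra|].
  specialize (Hf (S n)); lra.
Qed.

Lemma sum1_term_le (n k : nat) (f : nat -> R) :
  (forall k, 0 <= f k) -> (1 <= k <= n)%nat -> f k <= sum1 n f.
Proof.
  intros Hf; induction n as [|n IH]; intros Hk; [lia|]; simpl.
  destruct (Nat.eq_dec k (S n)) as [->|Hne].
  - pose proof (sum1_nonneg n f Hf); lra.
  - pose proof (IH ltac:(lia)); specialize (Hf (S n)); lra.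
Qed.

Lemma norm2_pos (L j : nat) (l : nat -> R) :
  (1 <= j <= L)%nat -> l j <> 0 -> 0 < norm2 L l.
Proof.
  intros Hj Hlj; unfold norm2; apply sqrt_lt_R0.
  assert (Hsq : 0 < l j * l j) by (apply Rsqr_pos_lt; exact Hlj).
  pose proof (sum1_term_le L j (fun k => l k * l k)
                (fun k => Rle_0_sqr (l k)) Hj) as Hterm.
  simpl in Hterm; lra.
Qed.

Lemma softmax_le_exp_sub (L i j : nat) (l : nat -> R) :
  (1 <= j <= L)%nat -> softmax L l i <= exp (l i - l j).
Proof.
  intros Hj; unfold softmax, Rdiv, Rminus.
  rewrite exp_plus, exp_Ropp.
  apply Rmult_le_compat_l; [left; apply exp_pos|].
  apply Rinv_le_contravar; [apply exp_pos|].
  exact (sum1_term_le L j (fun k => exp (l k)) (fun k => Rlt_le _ _ (exp_pos (l k))) Hj).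
Qed.

Lemma exp_le_of_le_ln (x e : R) : 0 < e -> x <= ln e -> exp x <= e.
Proof.
  intros He [Hlt|Heq].
  - left; rewrite <- (exp_ln e He) at 1; now apply exp_increasing.
  - rewrite Heq, exp_ln; lra.
Qed.

Definition cliff_witness (p q : nat) (h : R) (i : nat) : R :=
  if (i <? p)%nat then INR i else if (i <=? p + q)%nat then h else 0.

Section CliffWitness.

Variables (p q : nat) (h : R).

Lemma cliff_witness_rise (i : nat) : (i < p)%nat -> cliff_witness p q h i = INR i.
Proof.
  intros Hi; unfold cliff_witness.
  destruct (Nat.ltb_spec i p); [reflexivity|lia].
Qed.

Lemma cliff_witness_plateau (i : nat) :
  (p <= i <= p + q)%nat -> cliff_witness p q h i = h.
Proof.
  intros Hi; unfold cliff_witness.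
  destruct (Nat.ltb_spec i p); [lia|].
  destruct (Nat.leb_spec i (p + q)); [reflexivity|lia].
Qed.

Lemma cliff_witness_tail (i : nat) : (p + q < i)%nat -> cliff_witness p q h i = 0.
Proof.
  intros Hi; unfold cliff_witness.
  destruct (Nat.ltb_spec i p); [lia|].
  destruct (Nat.leb_spec i (p + q)); [lia|reflexivity].
Qed.

Lemma cliff_witness_off_plateau_le (i : nat) :
  (1 <= p)%nat -> (i < p \/ p + q < i)%nat -> cliff_witness p q h i <= INR p - 1.
Proof.
  intros Hp [Hi|Hi].
  - rewrite cliff_witness_rise by exact Hi.
    pose proof (le_INR (S i) p Hi) as Hle; rewrite S_INR in Hle; lra.
  - rewrite cliff_witness_tail by exact Hi.
    pose proof (le_INR 1 p Hp); simpl in *; lra.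
Qed.

Lemma cliff_witness_cliff_seq (L : nat) :
  (2 <= p)%nat -> INR p - 1 < h -> cliff_seq L p q (cliff_witness p q h).
Proof.
  intros Hp Hh; split; [|split].
  - intros i Hi; rewrite cliff_witness_rise by lia.
    destruct (Nat.eq_dec (S i) p) as [Hpeak|Hne].
    + rewrite cliff_witness_plateau by lia; rewrite <- Hpeak, S_INR in Hh; lra.
    + rewrite cliff_witness_rise by lia; rewrite S_INR; lra.
  - intros j Hj.
    rewrite (cliff_witness_plateau j), (cliff_witness_plateau p) by lia.
    pose proof (cliff_witness_off_plateau_le (p - 1) ltac:(lia) ltac:(lia)); lra.
  - intros i Hi.
    rewrite cliff_witness_tail, cliff_witness_rise by lia; simpl; lra.
Qed.

End CliffWitness.

Theorem lemmaE5 (L p q : nat) (hL : (0 < L)%nat) (hq : (0 < q)%nat)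
  (hp : (2 <= p)%nat) (hpq : (p + q <= L)%nat) (eps : R) (heps : 0 < eps) :
  exists l : nat -> R,
    cliff_seq L p q l /\
    (exists C : R, 0 < C /\ norm2 L l = C) /\
    (forall i : nat, ((1 <= i <= p - 1)%nat \/ (p + q + 1 <= i <= L)%nat) ->
       softmax L l i <= eps).
Proof.
  set (h := INR p + Rabs (ln eps)).
  assert (Hh : INR p <= h) by (unfold h; pose proof (Rabs_pos (ln eps)); lra).
  assert (Hp0 : 2 <= INR p) by (apply (le_INR 2 p hp)).
  set (l := cliff_witness p q h).
  assert (Hpeak : l p = h) by (apply cliff_witness_plateau; lia).
  exists l; split; [|split].
  - apply cliff_witness_cliff_seq; [exact hp|lra].
  - exists (norm2 L l); split; [|reflexivity].
    apply (norm2_pos L p); [lia|rewrite Hpeak; lra].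
  - intros i Hi.
    apply Rle_trans with (exp (l i - l p)); [apply softmax_le_exp_sub; lia|].
    apply exp_le_of_le_ln; [exact heps|].
    pose proof (cliff_witness_off_plateau_le p q h i ltac:(lia) ltac:(lia)) as Hoff.
    pose proof (Rle_abs (- ln eps)) as Habs; rewrite Rabs_Ropp in Habs.
    fold l in Hoff; rewrite Hpeak; unfold h; lra.
Qed.
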